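(* For every $n\geq1$, the number of $\mathcal{B}_n$-orbits of acute $0/1$-triangles in $[0,1]^n$ equals $$\left\lfloor\frac{2n^3+3n^2-6n+9}{72}\right\rfloor.$$
   Context: A $0/1$-triangle in $[0,1]^n$ is the convex hull of three distinct points of $\{0,1\}^n$; it is acute if all three of its angles are strictly less than $\pi/2$. $\mathcal{B}_n$ is the hyperoctahedral group of symmetries of $[0,1]^n$ (acting on $\{0,1\}^n$ by coordinate permutations combined with complementation of a subset of coordinates); two triangles are counted as the same if one is mapped onto the other by an element of $\mathcal{B}_n$. *)

From mathcomp Require Import all_boot all_order all_algebra all_fingroup.
Set Implicit Arguments. Unset Strict Implicit. Unset Printing Implicit Defensive.
Import GRing.Theory Num.Theory.

Definition pt (n : nat) := {ffun 'I_n -> bool}.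

(* Inner product <u - v, w - v> (integer valued), i.e. the cosine numerator
   of the angle at vertex v of the triangle u v w. *)
Definition edge_dot n (u v w : pt n) : int :=
  (\sum_(i < n) ((u i)%:Z - (v i)%:Z) * ((w i)%:Z - (v i)%:Z))%R.

(* A 0/1-triangle: convex hull of three distinct points of {0,1}^n,
   represented by its vertex set (three-element subset of {0,1}^n). *)
Definition triangle01 n (T : {set pt n}) : bool := #|T| == 3.

(* Acute: each angle is < pi/2, i.e. at every vertex v with the other two
   vertices u, w, the inner product <u - v, w - v> is positive. *)
Definition acute01 n (T : {set pt n}) : bool :=
  triangle01 T &&
  [forall u in T, forall v in T, forall w in T,
     [&& u != v, w != v & u != w] ==> (0 < edge_dot u v w)%R].

(* Hyperoctahedral group B_n: coordinate permutation s combined with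
   complementation of the coordinates in c. *)
Definition bact n (s : 'S_n) (c : {ffun 'I_n -> bool}) (x : pt n) : pt n :=
  [ffun i => x (s i) (+) c i].

Definition bimage n (s : 'S_n) (c : {ffun 'I_n -> bool}) (T : {set pt n})
  : {set pt n} := [set bact s c x | x in T].

Definition borbit n (T : {set pt n}) : {set {set pt n}} :=
  [set bimage s c T | s : 'S_n, c : {ffun 'I_n -> bool}].

Definition num_acute_orbits n : nat :=
  #|[set borbit T | T in [set T : {set pt n} | acute01 T]]|.

From mathcomp Require Import all_boot all_order all_algebra all_fingroup.
From mathcomp Require Import zify.
Set Implicit Arguments. Unset Strict Implicit. Unset Printing Implicit Defensive.

(* At a vertex v of a 0/1-triangle {u, v, w} the inner product <u - v, w - v> is the
   number of coordinates in which both u and w differ from v, the overlap at v.  The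
   three overlaps a, b, c and n - a - b - c count the four kinds of coordinates of the
   triangle, so triangles with the same multiset of overlaps differ by a coordinate
   permutation followed by a complementation, and the sorted overlaps are a complete
   B_n-invariant.  Acute triangles have positive overlaps, and every triple
   0 < a <= b <= c with a + b + c <= n is realised by a triangle whose vertices are
   indicator vectors of intervals.  The number t(n) of such triples satisfies
   t(n + 3) = t(n) + floor((n + 2)^2 / 4), which gives the formula by induction on n
   in steps of six. *)

Lemma sum_nat_range m l h : \sum_(i < m) ((l <= i) && (i < h)) = minn m h - l.
Proof.
elim: m => [|m IH]; first by rewrite big_ord0 min0n.
by rewrite big_ord_recr /= IH; case: leqP; case: leqP => /=; lia.
Qed.

Lemma sum_shift a K (F : nat -> nat) : a <= K ->
  \sum_(b < K) (a <= b) * F b = \sum_(q < K - a) F (a + q).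
Proof.
elim: a K F => [|a IH] K F aK.
  by rewrite subn0; apply: eq_bigr => i _; rewrite mul1n.
case: K aK => // K aK.
by rewrite big_ord_recl mul0n add0n (IH K (fun b => F b.+1)) ?subSS.
Qed.

Lemma sum_sub_double x K : x <= K -> \sum_(q < K) (x - 2 * q) = x.+1 ^ 2 %/ 4.
Proof.
elim/ltn_ind: x K => -[|[|x]] IH [|K] //= xK; rewrite ?big_ord0 // big_ord_recl.
- by rewrite big1 // => i _; lia.
- by rewrite big1 // => i _; rewrite lift0; lia.
rewrite (eq_bigr (fun i : 'I_K => x - 2 * i)); last by move=> i _; rewrite lift0; lia.
have -> : x.+3 ^ 2 = x.+2 * 4 + x.+1 ^ 2 by rewrite !expnS expn0; lia.
by rewrite IH 1?ltnW // divnMDl // subn0.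
Qed.

Definition sorted_triples n : {set 'I_n.+1 * 'I_n.+1 * 'I_n.+1} :=
  [set t : 'I_n.+1 * 'I_n.+1 * 'I_n.+1 |
     [&& 0 < t.1.1, t.1.1 <= t.1.2, t.1.2 <= t.2 & t.1.1 + t.1.2 + t.2 <= n]].

Lemma card_sorted_triples n :
  #|sorted_triples n| = \sum_(a < n.+1) (0 < a) * ((n.+1 - 3 * a).+1 ^ 2 %/ 4).
Proof.
pose P (a b c : nat) := [&& 0 < a, a <= b, b <= c & a + b + c <= n].
rewrite -sum1_card (eq_bigl _ _ (fun t => in_set _ t)) big_mkcond /=.
rewrite -(pair_bigA _ (fun (ab : 'I_n.+1 * 'I_n.+1) (c : 'I_n.+1) => (P ab.1 ab.2 c : nat))) /=.
rewrite -(pair_bigA _ (fun a b : 'I_n.+1 => \sum_(c < n.+1) (P a b c : nat))) /=.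
apply: eq_bigr => a _.
have sum_c (b : 'I_n.+1) :
    \sum_(c < n.+1) P a b c = (0 < a) * ((a <= b) * (n.+1 - a - b - b)).
  rewrite (eq_bigr (fun c : 'I_n.+1 => (0 < a) * ((a <= b) * ((b <= c) && (c < n.+1 - a - b))))).
    by rewrite -!big_distrr /= sum_nat_range; congr (_ * (_ * _)); lia.
  move=> c _; rewrite /P; case: (0 < a); case: (a <= b) => //=.
  by case: (leqP b c) => /=; lia.
rewrite (eq_bigr _ (fun b _ => sum_c b)) -big_distrr /=; congr (_ * _).
rewrite (@sum_shift a n.+1 (fun b => n.+1 - a - b - b)); last by rewrite ltnW.
by rewrite -(@sum_sub_double (n.+1 - 3 * a) (n.+1 - a)); [apply: eq_bigr => q _; lia | lia].
Qed.

Lemma card_sorted_triples_add3 n : #|sorted_triples n.+3| = #|sorted_triples n| + n.+2 ^ 2 %/ 4.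
Proof.
rewrite !card_sorted_triples big_ord_recl mul0n add0n big_ord_recl /= addnC.
congr (_ + _); last first.
  by rewrite mul1n; congr (_ ^ 2 %/ 4); rewrite /bump /=; lia.
rewrite [RHS]big_ord_recl mul0n add0n !big_ord_recr /=.
have -> : n.+4 - 3 * bump 0 (bump 0 n.+1) = 0 by rewrite /bump /=; lia.
have -> : n.+4 - 3 * bump 0 (bump 0 n) = 0 by rewrite /bump /=; lia.
rewrite !addn0; apply: eq_bigr => i _; rewrite /bump /= !mul1n; congr (_ ^ 2 %/ 4); lia.
Qed.

Lemma card_sorted_triplesE n : #|sorted_triples n| = (2 * n ^ 3 + 3 * n ^ 2 + 9 - 6 * n) %/ 72.
Proof.
elim/ltn_ind: n => -[|[|[|[|[|[|m]]]]]] IH;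
  try by rewrite card_sorted_triples !big_ord_recr big_ord0.
rewrite (card_sorted_triples_add3 m.+3) card_sorted_triples_add3 IH; last by lia.
have pair_sq : (m.+2 ^ 2 %/ 4 + m.+3.+2 ^ 2 %/ 4) * 2 = m ^ 2 + 7 * m + 14.
  by rewrite -(odd_double_half m); case: (odd m) => /=; lia.
move: pair_sq; set k := _ + _ => pair_sq; clear IH.
have -> : 2 * m.+2.+4 ^ 3 + 3 * m.+2.+4 ^ 2 + 9 - 6 * m.+2.+4 =
          k * 72 + (2 * m ^ 3 + 3 * m ^ 2 + 9 - 6 * m) by nia.
by rewrite divnMDl // /k; lia.
Qed.

Lemma perm_of_fiber_sums (A : eqType) n (f g : 'I_n -> A) :
  (forall k, \sum_(i < n) (f i == k) = \sum_(i < n) (g i == k)) ->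
  exists p : 'S_n, forall i, f i = g (p i).
Proof.
move=> fibers.
have count_fiber (h : 'I_n -> A) k : count_mem k [tuple h i | i < n] = \sum_(i < n) (h i == k).
  by rewrite /= count_map -sum1_count big_enum_cond big_mkcond.
have /tuple_permP [p fgp] : perm_eq [tuple f i | i < n] [tuple g i | i < n].
  by apply/allP => a _; rewrite /= !count_fiber fibers.
exists p => i; have := congr1 (nth (f i) ^~ i) fgp.
by rewrite -!tnth_nth !tnth_mktuple.
Qed.

Lemma card_set3 (A : finType) (x y z : A) :
  y != x -> z != x -> z != y -> #|[set x; y; z]| = 3.
Proof.
move=> yx zx zy; rewrite -setUA cardsU1 cards2 !inE.
by rewrite negb_or !(eq_sym x) yx zx (eq_sym y) zy.
Qed.

Lemma card3_enum (A : finType) (T : {set A}) s : #|T| = 3 -> perm_eq s (enum T) ->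
  exists x y z, [/\ s = [:: x; y; z], T = [set x; y; z] & [/\ y != x, z != x & z != y]].
Proof.
move=> T3 sT; have := perm_uniq sT; rewrite enum_uniq.
have := perm_size sT; rewrite -cardE T3.
case: s sT => [|x [|y [|z []]]] //= sT _.
rewrite !inE negb_or => /and3P [/andP [xy xz] yz _]; exists x, y, z.
split; rewrite 1?eq_sym ?(eq_sym z) //.
by apply/setP => v; rewrite -mem_enum -(perm_mem sT) !inE orbA.
Qed.

Section Triangles.
Variable n : nat.
Implicit Types (x y z u v w : pt n) (T : {set pt n}) (s : 'S_n) (c : {ffun 'I_n -> bool}).

Lemma borbit_trans T1 T2 T3 : T2 \in borbit T1 -> T3 \in borbit T2 -> T3 \in borbit T1.
Proof.
move=> /imset2P [s c _ _ ->] /imset2P [s' c' _ _ ->]; apply/imset2P.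
exists (s' * s)%g [ffun i => c (s' i) (+) c' i] => //.
rewrite /bimage -imset_comp; apply: eq_imset => x.
by apply/ffunP => i; rewrite !ffunE permM addbA.
Qed.

Lemma borbit_sym T1 T2 : T2 \in borbit T1 -> T1 \in borbit T2.
Proof.
move=> /imset2P [s c _ _ ->]; apply/imset2P.
exists s^-1%g [ffun i => c (s^-1%g i)] => //.
rewrite /bimage -imset_comp -[LHS]imset_id; apply: eq_imset => x.
by apply/ffunP => i; rewrite !ffunE permKV addbK.
Qed.

Lemma borbit_refl T : T \in borbit T.
Proof.
apply/imset2P; exists 1%g [ffun => false] => //.
rewrite /bimage -[LHS]imset_id; apply: eq_imset => x.
by apply/ffunP => i; rewrite !ffunE perm1 addbF.
Qed.

Lemma borbit_eq T1 T2 : T2 \in borbit T1 -> borbit T2 = borbit T1.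
Proof.
move=> T12; apply/setP => T; apply/idP/idP => [T2T|T1T].
  exact: borbit_trans T12 T2T.
exact: borbit_trans (borbit_sym T12) T1T.
Qed.

Lemma bact_inj s c : injective (bact s c).
Proof.
move=> x y /ffunP xy; apply/ffunP => j; have := xy (s^-1%g j).
by rewrite !ffunE permKV => /addIb.
Qed.

Definition overlap x y z : nat := \sum_(i < n) ((y i != x i) && (z i != x i)).

Lemma edge_dot_overlap u v w : edge_dot u v w = Posz (overlap v u w).
Proof.
rewrite /edge_dot /overlap (big_morph Posz PoszD erefl).
by apply: eq_bigr => i _; case: (u i); case: (v i); case: (w i).
Qed.

Lemma overlapC x y z : overlap x y z = overlap x z y.
Proof. by apply: eq_bigr => i _; rewrite andbC. Qed.

Lemma overlap_gt0 x y z : 0 < overlap x y z -> y != x /\ z != x.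
Proof.
move=> pos; split; apply/eqP => eq_x; move: pos;
  by rewrite /overlap big1 // => i _; rewrite eq_x eqxx ?andbF.
Qed.

Lemma overlap_sum_le x y z : overlap x y z + overlap y x z + overlap z x y <= n.
Proof.
rewrite /overlap -!big_split /= -[n in _ <= n]card_ord -sum1_card.
by apply: leq_sum => i _; case: (x i); case: (y i); case: (z i).
Qed.

Lemma acute_set3 x y z : y != x -> z != x -> z != y ->
  acute01 [set x; y; z] = [&& 0 < overlap x y z, 0 < overlap y x z & 0 < overlap z x y].
Proof.
move=> yx zx zy; rewrite /acute01 /triangle01 card_set3 //=.
apply/forall_inP/and3P => [acute | [px py pz] u uT].
  have at_vertex v u w : v \in [set x; y; z] -> u \in [set x; y; z] -> w \in [set x; y; z] ->
      u != v -> w != v -> u != w -> 0 < overlap v u w.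
    move=> vT uT wT uv wv uw; move/forall_inP: (acute u uT) => /(_ v vT) /forall_inP /(_ w wT).
    by rewrite uv wv uw edge_dot_overlap ltz_nat.
  by split; apply: at_vertex; rewrite ?inE ?eqxx ?orbT // eq_sym.
apply/forall_inP => v vT; apply/forall_inP => w wT.
apply/implyP => /and3P [uv wv uw]; rewrite edge_dot_overlap ltz_nat.
move: uT vT wT uv wv uw; rewrite !inE -!orbA.
by move=> /or3P [] /eqP -> /or3P [] /eqP -> /or3P [] /eqP ->;
  rewrite ?eqxx // => _ _ _; rewrite // overlapC.
Qed.

Definition overlap_at T v : nat :=
  \sum_(i < n) [forall u in T, (u != v) ==> (u i != v i)].

Definition profile T : seq nat := sort leq [seq overlap_at T v | v <- enum T].

Lemma overlap_at_set3 x y z : y != x -> z != x -> overlap_at [set x; y; z] x = overlap x y z.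
Proof.
move=> yx zx; apply: eq_bigr => i _; congr nat_of_bool.
apply/forall_inP/andP => [differ | [yix zix] u].
  by split; [apply: (implyP (differ y _)) | apply: (implyP (differ z _))];
    rewrite ?inE ?eqxx ?orbT.
by rewrite !inE -!orbA => /or3P [] /eqP ->; rewrite ?eqxx ?yix ?zix ?implybT.
Qed.

Lemma overlaps_set3 x y z : y != x -> z != x -> z != y ->
  [seq overlap_at [set x; y; z] v | v <- [:: x; y; z]] =
  [:: overlap x y z; overlap y x z; overlap z x y].
Proof.
move=> yx zx zy; rewrite /= overlap_at_set3 //.
have xy : x != y by rewrite eq_sym.
have yz : y != z by rewrite eq_sym.
have -> : [set x; y; z] = [set y; x; z] by apply/setP => v; rewrite !inE (orbC (v == x)).
rewrite overlap_at_set3 //.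
have -> : [set y; x; z] = [set z; x; y] by apply/setP => v; rewrite !inE orbC (orbC (v == y)) orbA.
by rewrite overlap_at_set3 // eq_sym.
Qed.

Lemma profile_perm T r : perm_eq r (enum T) -> profile T = sort leq [seq overlap_at T v | v <- r].
Proof.
move=> rT; apply/(perm_sortP leq_total leq_trans anti_leq).
by rewrite perm_map // perm_sym rT.
Qed.

Lemma profile_set3 x y z : y != x -> z != x -> z != y ->
  profile [set x; y; z] = sort leq [:: overlap x y z; overlap y x z; overlap z x y].
Proof.
move=> yx zx zy; rewrite (@profile_perm _ [:: x; y; z]) ?overlaps_set3 //.
apply: uniq_perm => [||v]; rewrite ?enum_uniq ?mem_enum ?inE ?orbA //.
by rewrite /= !inE negb_or !(eq_sym x) yx zx (eq_sym y) zy.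
Qed.

Lemma profile_card3 T : #|T| = 3 -> exists x y z,
  [/\ T = [set x; y; z], [/\ y != x, z != x & z != y] &
      profile T = [:: overlap x y z; overlap y x z; overlap z x y]].
Proof.
move=> T3; have by_overlap : perm_eq (sort (relpre (overlap_at T) leq) (enum T)) (enum T).
  by rewrite perm_sort.
have [x [y [z [xyz T_xyz [yx zx zy]]]]] := card3_enum T3 by_overlap.
exists x, y, z; split => //.
by rewrite /profile sort_map xyz T_xyz overlaps_set3.
Qed.

Lemma overlap_at_bimage s c T v : overlap_at (bimage s c T) (bact s c v) = overlap_at T v.
Proof.
rewrite /overlap_at [RHS](reindex_inj (@perm_inj _ s)); apply: eq_bigr => i _.
congr nat_of_bool; apply/forall_inP/forall_inP => differ u uT.
  have := differ (bact s c u) (imset_f _ uT).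
  by rewrite (inj_eq (@bact_inj s c)) !ffunE (inj_eq (@addIb _)).
case/imsetP: uT => w wT ->.
by rewrite (inj_eq (@bact_inj s c)) !ffunE (inj_eq (@addIb _)); apply: differ.
Qed.

Lemma profile_bimage s c T : profile (bimage s c T) = profile T.
Proof.
have enum_bimage : perm_eq [seq bact s c v | v <- enum T] (enum (bimage s c T)).
  apply: uniq_perm => [||v]; rewrite ?(map_inj_uniq (@bact_inj s c)) ?enum_uniq //.
  by rewrite mem_enum; apply/mapP/imsetP => -[w wT ->]; exists w; rewrite ?mem_enum in wT *.
rewrite (profile_perm enum_bimage) -map_comp.
by under eq_map => v do rewrite /= overlap_at_bimage.
Qed.

Lemma profile_borbit T T' : T' \in borbit T -> profile T' = profile T.
Proof. by case/imset2P => s c _ _ ->; apply: profile_bimage. Qed.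

Lemma bact_of_overlaps x y z x' y' z' :
  overlap x y z = overlap x' y' z' -> overlap y x z = overlap y' x' z' ->
  overlap z x y = overlap z' x' y' ->
  exists s c, [/\ bact s c x = x', bact s c y = y' & bact s c z = z'].
Proof.
move=> eq_x eq_y eq_z.
pose kind u v w i := (u i (+) v i, u i (+) w i).
have kind_sums u v w :
  [/\ \sum_(i < n) (kind u v w i == (true, true)) = overlap u v w,
      \sum_(i < n) (kind u v w i == (true, false)) = overlap v u w,
      \sum_(i < n) (kind u v w i == (false, true)) = overlap w u v &
      \sum_(i < n) (kind u v w i == (false, false)) =
        n - (overlap u v w + overlap v u w + overlap w u v)].
  have total : \sum_(i < n) (kind u v w i == (false, false)) +
      (overlap u v w + overlap v u w + overlap w u v) = n.
    rewrite /overlap -!big_split /= -[RHS]card_ord -sum1_card.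
    by apply: eq_bigr => i _; rewrite /kind; case: (u i); case: (v i); case: (w i).
  split; [| | | by rewrite -[in RHS]total addnK];
    by apply: eq_bigr => i _; rewrite /kind; case: (u i); case: (v i); case: (w i).
have [p kind_p] : exists p : 'S_n, forall i, kind x' y' z' i = kind x y z (p i).
  have [tt tf ft ff] := kind_sums x y z; have [tt' tf' ft' ff'] := kind_sums x' y' z'.
  apply: perm_of_fiber_sums => -[[] []];
    by rewrite ?tt ?tf ?ft ?ff ?tt' ?tf' ?ft' ?ff' ?eq_x ?eq_y ?eq_z.
exists p, [ffun i => x (p i) (+) x' i].
by split; apply/ffunP => i; rewrite !ffunE; case: (kind_p i);
  case: (x (p i)); case: (y (p i)); case: (z (p i)); case: (x' i); case: (y' i); case: (z' i).
Qed.

Lemma set3_borbit x y z x' y' z' :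
  overlap x y z = overlap x' y' z' -> overlap y x z = overlap y' x' z' ->
  overlap z x y = overlap z' x' y' -> [set x'; y'; z'] \in borbit [set x; y; z].
Proof.
move=> eq_x eq_y eq_z; have [s [c [<- <- <-]]] := bact_of_overlaps eq_x eq_y eq_z.
apply/imset2P; exists s c => //.
by rewrite /bimage imsetU imsetU1 !imset_set1.
Qed.

Lemma profile_eq_borbit T T' : #|T| = 3 -> #|T'| = 3 -> profile T = profile T' -> T' \in borbit T.
Proof.
move=> /profile_card3 [x [y [z [-> _ ->]]]] /profile_card3 [x' [y' [z' [-> _ ->]]]] [].
exact: set3_borbit.
Qed.

Definition interval_pt l h : pt n := [ffun i : 'I_n => l <= i < h].

Definition canon (a b c : nat) : {set pt n} :=
  [set interval_pt 0 0; interval_pt 0 (a + b); interval_pt b (a + b + c)].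

Lemma overlaps_canon (a b c : nat) : a + b + c <= n ->
  [/\ overlap (interval_pt 0 0) (interval_pt 0 (a + b)) (interval_pt b (a + b + c)) = a,
      overlap (interval_pt 0 (a + b)) (interval_pt 0 0) (interval_pt b (a + b + c)) = b &
      overlap (interval_pt b (a + b + c)) (interval_pt 0 0) (interval_pt 0 (a + b)) = c].
Proof.
move=> abc_n; rewrite /overlap; split.
- rewrite (eq_bigr (fun i : 'I_n => (b <= i < a + b : nat))) ?sum_nat_range; first lia.
  by move=> i _; rewrite !ffunE; lia.
- rewrite (eq_bigr (fun i : 'I_n => (0 <= i < b : nat))) ?sum_nat_range; first lia.
  by move=> i _; rewrite !ffunE; lia.
- rewrite (eq_bigr (fun i : 'I_n => (a + b <= i < a + b + c : nat))) ?sum_nat_range; first lia.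
  by move=> i _; rewrite !ffunE; lia.
Qed.

Lemma canon_spec (a b c : nat) : 0 < a -> a <= b -> b <= c -> a + b + c <= n ->
  [/\ #|canon a b c| = 3, acute01 (canon a b c) & profile (canon a b c) = [:: a; b; c]].
Proof.
move=> a_gt0 ab bc abc_n; have [ov0 ov1 ov2] := overlaps_canon abc_n.
set o := interval_pt 0 0 in ov0 ov1 ov2 *; set p := interval_pt 0 (a + b) in ov0 ov1 ov2 *.
set q := interval_pt b (a + b + c) in ov0 ov1 ov2 *.
have /overlap_gt0 [po qo] : 0 < overlap o p q by rewrite ov0.
have /overlap_gt0 [_ qp] : 0 < overlap p o q by rewrite ov1 (leq_trans a_gt0 ab).
rewrite /canon card_set3 // acute_set3 // profile_set3 // ov0 ov1 ov2.
split=> //; first by rewrite a_gt0 (leq_trans a_gt0 ab) (leq_trans a_gt0 (leq_trans ab bc)).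
by apply: sorted_sort; [exact: leq_trans | rewrite /= ab bc].
Qed.
End Triangles.

Section Classification.
Variable n : nat.

Definition triple_orbit (t : 'I_n.+1 * 'I_n.+1 * 'I_n.+1) : {set {set pt n}} :=
  borbit (canon n t.1.1 t.1.2 t.2).

Lemma triple_orbit_spec t : t \in sorted_triples n ->
  [/\ #|canon n t.1.1 t.1.2 t.2| = 3, acute01 (canon n t.1.1 t.1.2 t.2) &
      profile (canon n t.1.1 t.1.2 t.2) = [:: val t.1.1; val t.1.2; val t.2]].
Proof. by rewrite inE => /and4P [a_gt0 ab bc abc_n]; exact: canon_spec. Qed.

Lemma triple_orbit_inj : {in sorted_triples n &, injective triple_orbit}.
Proof.
move=> t1 t2 /triple_orbit_spec [_ _ prof1] /triple_orbit_spec [_ _ prof2] orbit12.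
have /profile_borbit : canon n t2.1.1 t2.1.2 t2.2 \in triple_orbit t1.
  by rewrite orbit12 borbit_refl.
rewrite prof1 prof2 => -[/val_inj eq_a /val_inj eq_b /val_inj eq_c].
by move: t1 t2 {prof1 prof2 orbit12} eq_a eq_b eq_c => [[? ?] ?] [[? ?] ?] /= -> -> ->.
Qed.

Lemma acute_borbit T : acute01 T -> exists2 t, t \in sorted_triples n & borbit T = triple_orbit t.
Proof.
move=> acuteT; have T3 : #|T| = 3 by case/andP: acuteT => /eqP.
have [x [y [z [T_xyz [yx zx zy] profT]]]] := profile_card3 T3.
move: acuteT; rewrite T_xyz acute_set3 // => /and3P [a_gt0 _ _].
have := sort_sorted leq_total [:: overlap x y z; overlap y x z; overlap z x y].
rewrite -profile_set3 // -T_xyz profT /= => /and3P [ab bc _].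
have := overlap_sum_le x y z.
set a := overlap x y z; set b := overlap y x z; set c := overlap z x y => abc_n.
exists (inord a, inord b, inord c); first by rewrite inE /= !inordK; lia.
rewrite /triple_orbit /= !inordK; try lia.
have [canon3 _ prof_canon] := canon_spec a_gt0 ab bc abc_n.
by apply/borbit_eq/profile_eq_borbit; rewrite ?prof_canon -?T_xyz.
Qed.

Lemma acute_orbits :
  [set borbit T | T in [set T : {set pt n} | acute01 T]] = triple_orbit @: sorted_triples n.
Proof.
apply/setP => O; apply/imsetP/imsetP => [[T] | [t tS ->]].
  by rewrite inE => /acute_borbit [t tS ->] ->; exists t.
by have [_ acute_t _] := triple_orbit_spec tS; exists (canon n t.1.1 t.1.2 t.2); rewrite ?inE.
Qed.
End Classification.

Theorem theorem4p23 (n : nat) : 1 <= n ->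
  num_acute_orbits n = (2 * n ^ 3 + 3 * n ^ 2 + 9 - 6 * n) %/ 72.
Proof.
move=> _; rewrite /num_acute_orbits acute_orbits card_in_imset ?card_sorted_triplesE //.
exact: triple_orbit_inj.
Qed.
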